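(* Let $n \geq 1$, $z \geq 2$, $\epsilon > 0$, and let $\mathbf{f}_1^{(0)}, \dots, \mathbf{f}_n^{(0)}$ be probability vectors in $\mathbb{R}^z$. For $t \geq 1$ define recursively $$p_{i,j}^{(t)} = \frac{\alpha_i^{(t)}}{\epsilon + D\left(\mathbf{f}_i^{(t-1)}, \mathbf{f}_j^{(t-1)}\right)}, \qquad \mathbf{f}_i^{(t)} = \sum_{j=1}^n p_{i,j}^{(t)} \mathbf{f}_j^{(t-1)},$$ where $\alpha_i^{(t)} > 0$ normalizes so that $\sum_{j} p_{i,j}^{(t)} = 1$ and $D(\mathbf{u}, \mathbf{v}) = \sqrt{\frac{1}{z}\sum_{k=1}^{z} (u_k - v_k)^2}$. Let $R$ be the quadratic scoring rule $R(\mathbf{g}, e) = 2g_e - \sum_{k=1}^z g_k^2$ for a probability vector $\mathbf{g} \in \mathbb{R}^z$ and outcome index $e \in \{1,\dots,z\}$. Then $R$ is effective with respect to the set of weights $\{p_{i,j}^{(t)} : 1 \le i,j \le n\}$ at every time $t \geq 1$; that is, for every $t \ge 1$ and all $i, j, k \in \{1,\dots,n\}$, $$p_{i,j}^{(t)} < p_{i,k}^{(t)} \iff \mathbb{E}_{\mathbf{f}_i^{(t-1)}}\left[R\left(\mathbf{f}_k^{(t-1)}\right)\right] > \mathbb{E}_{\mathbf{f}_i^{(t-1)}}\left[R\left(\mathbf{f}_j^{(t-1)}\right)\right].$$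
   Context: For probability vectors $\mathbf{f}, \mathbf{g} \in \mathbb{R}^z$, the $\mathbf{f}$-expected score of reporting $\mathbf{g}$ is $\mathbb{E}_{\mathbf{f}}[R(\mathbf{g})] = \sum_{e=1}^z f_e\, R(\mathbf{g}, e)$. *)

From mathcomp Require Import all_boot all_order all_algebra.
Set Implicit Arguments. Unset Strict Implicit. Unset Printing Implicit Defensive.
Import Order.TTheory GRing.Theory Num.Theory.
Local Open Scope ring_scope.

Section Defs.
Variables (R : rcfType) (n z : nat).

Definition prob_vec (g : 'rV[R]_z) : Prop :=
  (forall k, 0 <= g 0 k) /\ \sum_(k < z) g 0 k = 1.

Definition Dist (u v : 'rV[R]_z) : R :=
  Num.sqrt (z%:R^-1 * \sum_(k < z) (u 0 k - v 0 k) ^+ 2).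

Definition alpha (eps : R) (f : 'I_n -> 'rV[R]_z) (i : 'I_n) : R :=
  (\sum_(l < n) (eps + Dist (f i) (f l))^-1)^-1.

(* p_{i,j} computed from the beliefs at the previous time *)
Definition weight (eps : R) (f : 'I_n -> 'rV[R]_z) (i j : 'I_n) : R :=
  alpha eps f i / (eps + Dist (f i) (f j)).

Definition update (eps : R) (f : 'I_n -> 'rV[R]_z) (i : 'I_n) : 'rV[R]_z :=
  \sum_(j < n) weight eps f i j *: f j.

Fixpoint traj (eps : R) (f0 : 'I_n -> 'rV[R]_z) (t : nat) : 'I_n -> 'rV[R]_z :=
  match t with
  | O => f0
  | t'.+1 => update eps (traj eps f0 t')
  end.

Definition quad_score (g : 'rV[R]_z) (e : 'I_z) : R :=
  2 * g 0 e - \sum_(k < z) g 0 k ^+ 2.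

Definition exp_score (f g : 'rV[R]_z) : R :=
  \sum_(e < z) f 0 e * quad_score g e.

End Defs.

From mathcomp Require Import all_boot all_order all_algebra.
From mathcomp Require Import ring.
Import Order.TTheory GRing.Theory Num.Theory.
Local Open Scope ring_scope.

(* When [f] sums to one, the [f]-expected quadratic score of a report [g] is
   [|f|^2 - |f - g|^2], a decreasing function of [Dist f g]; the weight
   [p_ij] is a decreasing function of the same distance, so both orders agree.
   Averaging with weights summing to one keeps the beliefs summing to one,
   so this applies at every time step. *)

Section QuadraticScore.
Variables (R : rcfType) (z : nat).

Lemma exp_score_sqr_dist (f g : 'rV[R]_z) : \sum_(e < z) f 0 e = 1 ->
  exp_score f g = \sum_(e < z) f 0 e ^+ 2 - \sum_(e < z) (f 0 e - g 0 e) ^+ 2.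
Proof.
move=> f_sum1; rewrite /exp_score /quad_score.
under eq_bigr do rewrite mulrBr.
rewrite big_split /= sumrN -mulr_suml f_sum1 mul1r -!sumrB.
by apply: eq_bigr => e _; ring.
Qed.

Lemma ltr_Dist (u v w : 'rV[R]_z) : (0 < z)%N ->
  (Dist u v < Dist u w) =
  (\sum_(k < z) (u 0 k - v 0 k) ^+ 2 < \sum_(k < z) (u 0 k - w 0 k) ^+ 2).
Proof.
move=> z_gt0; have zV_gt0 : 0 < (z%:R : R)^-1 by rewrite invr_gt0 ltr0n.
have sqr_sum_ge0 (x : 'rV[R]_z) : 0 <= \sum_(k < z) (u 0 k - x 0 k) ^+ 2.
  by apply: sumr_ge0 => k _; apply: sqr_ge0.
rewrite /Dist [LHS]ltNge ler_sqrt; last by rewrite mulr_ge0 // ltW.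
by rewrite ler_pM2l // -ltNge.
Qed.

End QuadraticScore.

Section Weights.
Variables (R : rcfType) (n z : nat) (eps : R) (f : 'I_n -> 'rV[R]_z).
Hypothesis eps_gt0 : 0 < eps.

Lemma eps_Dist_gt0 (u v : 'rV[R]_z) : 0 < eps + Dist u v.
Proof. by rewrite ltr_wpDr ?sqrtr_ge0. Qed.

Lemma alpha_gt0 (i : 'I_n) : 0 < alpha eps f i.
Proof.
rewrite invr_gt0 (bigD1 i) //= ltr_pwDl ?invr_gt0 ?eps_Dist_gt0 //.
by apply: sumr_ge0 => l _; rewrite invr_ge0 ltW ?eps_Dist_gt0.
Qed.

Lemma sum_weight (i : 'I_n) : \sum_(j < n) weight eps f i j = 1.
Proof. by rewrite -mulr_sumr mulVf ?gt_eqF // -invr_gt0 alpha_gt0. Qed.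

Lemma ltr_weight (i j k : 'I_n) :
  (weight eps f i j < weight eps f i k) = (Dist (f i) (f k) < Dist (f i) (f j)).
Proof.
by rewrite ltr_pM2l ?alpha_gt0 // ltf_pV2 ?posrE ?eps_Dist_gt0 // ltrD2l.
Qed.

Lemma sum_update (i : 'I_n) :
  (forall l, \sum_(e < z) f l 0 e = 1) -> \sum_(e < z) update eps f i 0 e = 1.
Proof.
move=> f_sum1; rewrite /update.
under eq_bigr do rewrite summxE.
rewrite exchange_big /= -[RHS](sum_weight i); apply: eq_bigr => j _.
by under eq_bigr do rewrite mxE; rewrite -mulr_sumr f_sum1 mulr1.
Qed.

End Weights.

Lemma sum_traj (R : rcfType) (n z : nat) (eps : R) (f0 : 'I_n -> 'rV[R]_z) :
  0 < eps -> (forall i, \sum_(e < z) f0 i 0 e = 1) ->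
  forall t i, \sum_(e < z) traj eps f0 t i 0 e = 1.
Proof. by move=> eps_gt0 f0_sum1; elim=> [|t IH] i //=; apply: sum_update. Qed.

Theorem proposition3 (R : rcfType) (n z : nat) (eps : R)
    (f0 : 'I_n -> 'rV[R]_z) :
  (1 <= n)%N -> (2 <= z)%N -> 0 < eps ->
  (forall i, prob_vec (f0 i)) ->
  forall (t : nat), (1 <= t)%N ->
  forall i j k : 'I_n,
    weight eps (traj eps f0 t.-1) i j < weight eps (traj eps f0 t.-1) i k <->
    exp_score (traj eps f0 t.-1 i) (traj eps f0 t.-1 k) >
    exp_score (traj eps f0 t.-1 i) (traj eps f0 t.-1 j).
Proof.
move=> _ z_ge2 eps_gt0 f0_prob t _ i j k.
set f := traj eps f0 t.-1.
have f_sum1 l : \sum_(e < z) f l 0 e = 1.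
  by apply: sum_traj => // l'; case: (f0_prob l').
rewrite ltr_weight // ltr_Dist ?(leq_trans _ z_ge2) //.
by rewrite !exp_score_sqr_dist // ltrD2l ltrN2.
Qed.
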